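(* Let $N\ge1$ and let $\Upsilon_N:=\{\alpha\in\mathbb N_0^s:\prod_{j=1}^s(\alpha_j+1)\le N\}$ (the hyperbolic cross of order $N$). Then $\Upsilon_N$ is a minimal monomial degree reducing universal interpolation set of order $N$: it is a monomial degree reducing universal interpolation set of order $N$, and every monomial degree reducing universal interpolation set of order $N$ contains $\Upsilon_N$.
   Context: $\Pi=\mathbb C[x_1,\dots,x_s]$, $\deg$ is total degree with $\deg 0<0$. For $A\subset\mathbb N_0^s$, $\Pi_A$ is the span of the monomials $x^\alpha$, $\alpha\in A$. A subspace $\mathcal P\subseteq\Pi$ is a degree reducing universal interpolation space of order $N$ if for every finite $X\subset\mathbb C^s$ with $\#X\le N$ and every $q\in\Pi$ there is $p\in\mathcal P$ with $p|_X=q|_X$ and $\deg p\le\deg q$. A set $A\subset\mathbb N_0^s$ is a monomial degree reducing universal interpolation set of order $N$ if $\Pi_A$ is a degree reducing universal interpolation space of order $N$. *)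

From mathcomp Require Import all_boot all_algebra.
From mathcomp Require Import Rstruct.
From mathcomp.real_closed Require Import complex.
From mathcomp Require Export mpoly.
Set Implicit Arguments. Unset Strict Implicit. Unset Printing Implicit Defensive.
Local Open Scope ring_scope.

Definition C : numClosedFieldType := complex Rdefinitions.R.

(* Total degree with deg 0 < 0 is encoded by msize p = deg p + 1 (msize 0 = 0),
   so  deg p <= deg q  <->  msize p <= msize q. *)

Definition in_PiA (s : nat) (A : 'X_{1..s} -> Prop) (p : {mpoly C[s]}) : Prop :=
  forall m : 'X_{1..s}, m \in msupp p -> A m.

(* degree reducing universal interpolation space of order N;
   a finite set X of at most N points of C^s is a duplicate-free list of row vectors
   (a point x in C^s is the row vector x, with coordinates x ord0 i). *)
Definition DR_universal_interp_space (s : nat) (P : {mpoly C[s]} -> Prop)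
    (N : nat) : Prop :=
  forall (X : seq 'rV[C]_s) (q : {mpoly C[s]}),
    uniq X -> (size X <= N)%N ->
    exists p : {mpoly C[s]},
      [/\ P p, (forall x, x \in X -> p.@[x ord0] = q.@[x ord0]) & (msize p <= msize q)%N].

Definition monomial_DR_universal_interp_set (s : nat) (A : 'X_{1..s} -> Prop)
    (N : nat) : Prop :=
  DR_universal_interp_space (@in_PiA s A) N.

Definition hyperbolic_cross (s N : nat) (m : 'X_{1..s}) : Prop :=
  (\prod_(j < s) (m j + 1) <= N)%N.
Arguments hyperbolic_cross : clear implicits.

(* Fix X with #|X| <= N and call the monomial x^a reducible on X when its
   restriction to X is a linear combination of restrictions of monomials smaller than a
   in a degree-compatible term order.  Reducibility passes from a to a + d (multiply the
   combination by x^d), so the irreducible exponents form a lower set; ordered decreasingly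
   their restrictions are linearly independent, hence the box {b <= a} below an irreducible
   a has at most #|X| elements, i.e. a lies in the hyperbolic cross.  Induction along the
   term order then interpolates every monomial, hence every polynomial, on X by a
   combination of irreducible monomials of no larger degree.

   For m in the hyperbolic cross the grid {0..m_1} x ... x {0..m_s} has at
   most N points, and the tensor product of the normalised m_j-th finite differences is a
   functional on that grid which maps x^m to 1 and every other monomial of degree at most
   deg m to 0.  Applied to a degree reducing interpolant p of x^m on the grid it yields
   that the coefficient of x^m in p is 1, so m belongs to every admissible set. *)

From HB Require Import structures.
From mathcomp Require Import all_boot all_algebra.
From mathcomp Require Import mpoly.
From Stdlib Require Import Classical_Prop.
Import order.Order.TTheory order.Order.Syntax GRing.Theory Num.Theory.
Set Implicit Arguments. Unset Strict Implicit. Unset Printing Implicit Defensive.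
Local Open Scope ring_scope.
Local Delimit Scope order_scope with O.

Lemma big_ord_leq (T : Type) (idx : T) (op : T -> T -> T) (n a : nat) (F : nat -> T) :
  (a < n)%N -> \big[op/idx]_(k < n | (k <= a)%N) F k = \big[op/idx]_(k < a.+1) F k.
Proof. by move=> lt_an; rewrite (big_ord_widen_cond _ xpredT F lt_an). Qed.

Lemma card_ord_leq (n a : nat) : (a < n)%N -> #|[pred k : 'I_n | (k <= a)%N]| = a.+1.
Proof.
by move=> lt_an; rewrite -sum1_card (big_ord_leq 0%N addn (fun=> 1%N)) // sum1_card card_ord.
Qed.

Section Boxes.
Variable s : nat.

Definition grid (a : 'X_{1..s}) :=
  family (fun j => [pred k : 'I_(mdeg a).+1 | (k <= a j)%N]).

Lemma mnm_le_mdeg (a : 'X_{1..s}) j : (a j <= mdeg a)%N.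
Proof. by rewrite mdegE (bigD1 j) //= leq_addr. Qed.

Lemma card_grid (a : 'X_{1..s}) : #|grid a| = (\prod_j (a j).+1)%N.
Proof.
rewrite card_family foldrE big_map big_enum /=.
by apply: eq_bigr => j _; rewrite card_ord_leq // ltnS mnm_le_mdeg.
Qed.

Definition mnm_of_ffun n (f : {ffun 'I_s -> 'I_n}) : 'X_{1..s} :=
  [multinom (f j : nat) | j < s].

Lemma mnm_of_ffun_inj n : injective (@mnm_of_ffun n).
Proof.
by move=> f g /mnmP eq_fg; apply/ffunP => j; apply/val_inj; have := eq_fg j; rewrite !mnmE.
Qed.

Lemma mnm_of_ffun_grid (a : 'X_{1..s}) f : f \in grid a -> (mnm_of_ffun f <= a)%MM.
Proof. by move/familyP => le_fa; apply/mnm_lepP => j; rewrite mnmE; apply: le_fa. Qed.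

Lemma exists_coord_ltn (g m : 'X_{1..s}) :
  (mdeg g <= mdeg m)%N -> g != m -> exists j, (g j < m j)%N.
Proof.
move=> le_gm ne_gm; have /existsP// : [exists j, (g j < m j)%N].
apply: contraNT ne_gm => /existsPn no_j.
have le_mg : (m <= g)%MM by apply/mnm_lepP => j; rewrite leqNgt no_j.
have : (mdeg (g - m)%MM + mdeg m <= 0 + mdeg m)%N by rewrite -mdegD submK.
rewrite leq_add2r leqn0 mdeg_eq0 => /eqP g_sub_m.
by rewrite -(submK le_mg) g_sub_m add0m eqxx.
Qed.

End Boxes.

Lemma mulmxr_span (R : fieldType) m n (T : seq 'rV[R]_m) (D : 'M[R]_(m, n)) v :
  v \in <<T>>%VS -> v *m D \in <<map (mulmxr D) T>>%VS.
Proof.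
move=> vT; have := memv_img (linfun (mulmxr D)) vT.
by rewrite limg_span lfunE /=; under eq_map do rewrite lfunE.
Qed.

Lemma free_size_rV (R : fieldType) n (T : seq 'rV[R]_n) : free T -> (size T <= n)%N.
Proof. by move/eqP <-; have := dimvS (subvf <<T>>%VS); rewrite dimvf /dim /= mul1n. Qed.

Section Evaluations.
Variables (R : fieldType) (s : nat) (X : seq 'rV[R]_s).

Definition evals (p : {mpoly R[s]}) : 'rV[R]_(size X) := \row_(i < size X) p.@[X`_i ord0].

Fact evals_is_linear : linear evals.
Proof. by move=> c p q; apply/rowP => i; rewrite !mxE mevalD mevalZ. Qed.

HB.instance Definition _ := GRing.isLinear.Build R {mpoly R[s]} 'rV[R]_(size X) _ evals
  evals_is_linear.

Lemma evalsM p q : evals (p * q) = evals p *m diag_mx (evals q).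
Proof. by apply/rowP => i; rewrite mul_mx_diag !mxE mevalM. Qed.

Lemma meval_eq_evals p q :
  evals p = evals q -> {in X, forall x : 'rV[R]_s, p.@[x ord0] = q.@[x ord0]}.
Proof.
move=> /rowP eq_pq x xX; have ix : (index x X < size X)%N by rewrite index_mem.
by have := eq_pq (Ordinal ix); rewrite !mxE /= nth_index.
Qed.

(* [(_ < _)%O] is the degree-compatible, well-founded term order of mpoly. *)
Definition reducible (a : 'X_{1..s}) :=
  exists2 t : seq 'X_{1..s}, all (fun b : 'X_{1..s} => (b < a)%O) t &
    evals 'X_[a] \in <<[seq evals 'X_[b] | b <- t]>>%VS.

Lemma reducibleD (a d : 'X_{1..s}) : reducible a -> reducible (a + d)%MM.
Proof.
case=> t lt_ta a_span; exists [seq (b + d)%MM | b <- t].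
  by rewrite all_map; apply/sub_all: lt_ta => b /=; rewrite ltmc_add2l.
rewrite -map_comp mpolyXD evalsM.
under eq_map do rewrite /= mpolyXD evalsM.
by rewrite (map_comp (mulmxr _) (fun b => evals 'X_[b])); apply: mulmxr_span.
Qed.

Lemma irreducible_le (a b : 'X_{1..s}) : (b <= a)%MM -> ~ reducible a -> ~ reducible b.
Proof. by move=> le_ba + /(reducibleD (a - b)%MM); rewrite addmC submK. Qed.

Lemma free_irreducible (L : seq 'X_{1..s}) :
  sorted (fun a b : 'X_{1..s} => (b <= a)%O) L -> uniq L ->
  {in L, forall a, ~ reducible a} -> free [seq evals 'X_[a] | a <- L].
Proof.
elim: L => [|a L IHL] /= sorted_aL; first by rewrite nil_free.
case/andP=> aNL uniq_L irr_aL; have sorted_L := path_sorted sorted_aL.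
rewrite free_cons IHL // ?andbT => [|b bL]; last by apply: irr_aL; rewrite inE bL orbT.
apply/negP => a_span; apply: (irr_aL a (mem_head _ _)); exists L => //.
have /allP le_La : all (fun b : 'X_{1..s} => (b <= a)%O) L.
  by apply: (order_path_min _ sorted_aL) => b c e /= le_cb le_ec; apply: le_trans le_ec le_cb.
by apply/allP => b bL; rewrite lt_neqAle le_La // andbT; apply: contraNneq aNL => <-.
Qed.

Lemma irreducible_box_size (a : 'X_{1..s}) :
  ~ reducible a -> (\prod_j (a j).+1 <= size X)%N.
Proof.
move=> irr_a; set B := map (@mnm_of_ffun s _) (enum (grid a)).
set L := sort (fun a b : 'X_{1..s} => (b <= a)%O) B.
have perm_L : perm_eq L B by rewrite perm_sort.
have free_L : free [seq evals 'X_[b] | b <- L].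
  apply: free_irreducible.
  - by rewrite sort_sorted // => ? ?; apply: le_total.
  - by rewrite (perm_uniq perm_L) map_inj_uniq ?enum_uniq //; apply: mnm_of_ffun_inj.
  - move=> b; rewrite (perm_mem perm_L) => /mapP[f]; rewrite mem_enum => fa ->.
    exact: irreducible_le (mnm_of_ffun_grid fa) irr_a.
have := free_size_rV free_L.
by rewrite size_map (perm_size perm_L) size_map -cardE card_grid.
Qed.

End Evaluations.

Lemma in_PiA0 s (A : 'X_{1..s} -> Prop) : in_PiA A 0.
Proof. by move=> m; rewrite msupp0. Qed.

Lemma in_PiAD s A (p q : {mpoly C[s]}) : in_PiA A p -> in_PiA A q -> in_PiA A (p + q).
Proof. by move=> Ap Aq m /msuppD_le; rewrite mem_cat => /orP[/Ap|/Aq]. Qed.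

Lemma in_PiAZ s A c (p : {mpoly C[s]}) : in_PiA A p -> in_PiA A (c *: p).
Proof. by move=> Ap m /msuppZ_le /Ap. Qed.

Lemma in_PiAX s (A : 'X_{1..s} -> Prop) a : A a -> in_PiA A 'X_[a].
Proof. by move=> Aa m; rewrite msuppX inE => /eqP ->. Qed.

Section Representable.
Variables (s : nat) (A : 'X_{1..s} -> Prop) (X : seq 'rV[C]_s).

Definition representable (B : nat) (v : 'rV[C]_(size X)) :=
  exists p : {mpoly C[s]}, [/\ in_PiA A p, evals X p = v & (msize p <= B)%N].

Lemma representableW B B' v : (B <= B')%N -> representable B v -> representable B' v.
Proof. by move=> le_B [p [Ap <- le_pB]]; exists p; split=> //; apply: leq_trans le_B. Qed.

Lemma representable0 B : representable B 0.
Proof. by exists 0; rewrite linear0 msize0; split=> //; apply: in_PiA0. Qed.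

Lemma representableD B u v :
  representable B u -> representable B v -> representable B (u + v).
Proof.
move=> [p [Ap <- le_pB]] [q [Aq <- le_qB]]; exists (p + q); rewrite linearD; split=> //.
  exact: in_PiAD.
by apply: leq_trans (msizeD_le _ _) _; rewrite geq_max le_pB.
Qed.

Lemma representableZ B c v : representable B v -> representable B (c *: v).
Proof.
move=> [p [Ap <- le_pB]]; exists (c *: p); rewrite linearZ; split=> //.
  exact: in_PiAZ.
exact: leq_trans (msizeZ_le _ _) le_pB.
Qed.

Lemma representable_span B (T : seq 'rV[C]_(size X)) v :
  {in T, forall u, representable B u} -> v \in <<T>>%VS -> representable B v.
Proof.
move=> rep_T /(@coord_span _ _ _ (in_tuple T)) ->.
apply: big_ind => [|u w|i _]; [exact: representable0 | exact: representableD |].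
by apply/representableZ/rep_T/mem_nth.
Qed.

End Representable.

Section HyperbolicCross.
Variables (s N : nat) (X : seq 'rV[C]_s).
Hypothesis size_X : (size X <= N)%N.

Lemma representable_monomial (a : 'X_{1..s}) :
  representable (hyperbolic_cross s N) (mdeg a).+1 (evals X 'X_[a]).
Proof.
elim/(well_founded_induction (@ltom_wf s)): a => a IHa.
have [[t lt_ta a_span]|irr_a] := classic (reducible X a).
  apply: representable_span a_span => _ /mapP[b bt ->].
  have lt_ba : (b < a)%O by move/allP: lt_ta; apply.
  by apply: representableW (IHa b lt_ba); rewrite ltnS lemc_mdeg // ltW.
exists 'X_[a]; split; rewrite ?msizeX //; apply: in_PiAX.
rewrite /hyperbolic_cross; under eq_bigr do rewrite addn1.
exact: leq_trans (irreducible_box_size irr_a) size_X.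
Qed.

Lemma representable_evals (q : {mpoly C[s]}) :
  representable (hyperbolic_cross s N) (msize q) (evals X q).
Proof.
rewrite {2}(mpolyE q) linear_sum /= big_seq.
apply: big_ind => [|u v|m mq]; [exact: representable0 | exact: representableD |].
rewrite linearZ /=; apply/representableZ/(representableW _ (representable_monomial m)).
exact: msize_mdeg_lt.
Qed.

End HyperbolicCross.

Theorem hyperbolic_cross_DR_interp s N :
  monomial_DR_universal_interp_set (hyperbolic_cross s N) N.
Proof.
move=> X q _ size_X; have [p [Ap evals_pq le_pq]] := representable_evals size_X q.
by exists p; split=> //; apply: meval_eq_evals.
Qed.

Section GridFunctional.
Variables (R : numFieldType) (s : nat).

Lemma Vandermonde_nat_unit a : Vandermonde a.+1 (\row_(i < a.+1) (i%:R : R)) \in unitmx.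
Proof.
rewrite unitmxE unitfE det_Vandermonde.
apply/prodf_neq0 => i _; apply/prodf_neq0 => j lt_ij.
by rewrite !mxE subr_eq0 eqr_nat; apply: contraTneq lt_ij => ->; rewrite ltnn.
Qed.

(* Up to indexing these are (-1)^(a-k) 'C(a, k) / a`!, the weights of the a-th forward
   difference at 0 divided by a`!; all we use is that they solve the Vandermonde system. *)
Definition diff_weight (a k : nat) : R :=
  (invmx (Vandermonde a.+1 (\row_(i < a.+1) i%:R)) *m delta_mx ord_max (0 : 'I_1))
    (inord k) 0.

Lemma sum_diff_weight a e : (e <= a)%N ->
  \sum_(k < a.+1) diff_weight a k * k%:R ^+ e = (e == a)%:R.
Proof.
move=> le_ea; have := congr1 (fun w : 'cV[R]_a.+1 => w (inord e) 0)
  (mulKVmx (Vandermonde_nat_unit a) (delta_mx ord_max 0)).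
rewrite /= !mxE eqxx andbT -val_eqE /= inordK // => <-.
by apply: eq_bigr => k _; rewrite /diff_weight inord_val !mxE inordK // mulrC.
Qed.

Definition grid_point n (f : {ffun 'I_s -> 'I_n}) : 'rV[R]_s := \row_j (f j)%:R.

Lemma grid_point_inj n : injective (@grid_point n).
Proof.
move=> f g /rowP eq_fg; apply/ffunP => j; apply/val_inj/eqP.
by have := eq_fg j; rewrite !mxE => /eqP; rewrite eqr_nat.
Qed.

Definition grid_points (m : 'X_{1..s}) := [seq grid_point f | f <- enum (grid m)].

Definition grid_diff (m : 'X_{1..s}) (p : {mpoly R[s]}) : R :=
  \sum_(f in grid m) (\prod_j diff_weight (m j) (f j)) * p.@[grid_point f ord0].

Lemma grid_diff_eq m p q :
  {in grid_points m, forall x : 'rV[R]_s, p.@[x ord0] = q.@[x ord0]} ->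
  grid_diff m p = grid_diff m q.
Proof. by move=> eq_pq; apply: eq_bigr => f fm; rewrite eq_pq // map_f ?mem_enum. Qed.

Lemma grid_diff_mpolyE m p : grid_diff m p = \sum_(g <- msupp p) p@_g * grid_diff m 'X_[g].
Proof.
rewrite /grid_diff; under eq_bigr do rewrite mevalE mulr_sumr.
rewrite exchange_big /=; apply: eq_bigr => g _; rewrite mulr_sumr.
by apply: eq_bigr => f _; rewrite mevalX mulrCA.
Qed.

Lemma grid_diffX m g :
  grid_diff m 'X_[g] = \prod_j \sum_(k < (m j).+1) diff_weight (m j) k * k%:R ^+ g j.
Proof.
pose w j k := diff_weight (m j) k * k%:R ^+ g j.
transitivity (\prod_j \sum_(k < (mdeg m).+1 | (k <= m j)%N) w j k).
  rewrite bigA_distr_big_dep; apply: eq_bigr => f _.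
  by rewrite mevalX -big_split; apply: eq_bigr => j _; rewrite !mxE.
apply: eq_bigr => j _.
by rewrite (big_ord_leq 0 +%R (w j)) // ltnS mnm_le_mdeg.
Qed.

Lemma grid_diffX_le m g : (mdeg g <= mdeg m)%N -> grid_diff m 'X_[g] = (g == m)%:R.
Proof.
move=> le_gm; rewrite grid_diffX; have [-> | ne_gm] := eqVneq g m.
  by rewrite big1 // => j _; rewrite sum_diff_weight // eqxx.
have [j lt_gm] := exists_coord_ltn le_gm ne_gm.
by rewrite (bigD1 j) //= sum_diff_weight ?(ltnW lt_gm) // ltn_eqF // mul0r.
Qed.

Lemma grid_diff_mcoeff m p : (msize p <= (mdeg m).+1)%N -> grid_diff m p = p@_m.
Proof.
move=> le_pm; rewrite grid_diff_mpolyE [in RHS](mpolyE p) raddf_sum /=.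
apply: eq_big_seq => g gp; rewrite mcoeffZ mcoeffX grid_diffX_le //.
by rewrite -ltnS; apply: leq_trans (msize_mdeg_lt gp) le_pm.
Qed.

End GridFunctional.

Theorem hyperbolic_cross_minimal s N (A : 'X_{1..s} -> Prop) :
  monomial_DR_universal_interp_set A N -> forall m, hyperbolic_cross s N m -> A m.
Proof.
move=> DR_A m cross_m; set X := @grid_points C s m.
have uniq_X : uniq X by rewrite map_inj_uniq ?enum_uniq //; apply: grid_point_inj.
have size_X : (size X <= N)%N.
  rewrite size_map -cardE card_grid; under eq_bigr do rewrite -addn1.
  exact: cross_m.
have [p [Ap p_eq le_pm]] := DR_A X 'X_[m] uniq_X size_X.
rewrite msizeX in le_pm; have pm1 : p@_m = 1.
  rewrite -grid_diff_mcoeff // (grid_diff_eq p_eq) grid_diff_mcoeff ?msizeX //.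
  by rewrite mcoeffX eqxx.
by apply: Ap; rewrite mcoeff_msupp pm1 oner_neq0.
Qed.

Theorem corollary23 (s N : nat) : (1 <= N)%N ->
  monomial_DR_universal_interp_set (hyperbolic_cross s N) N /\
  (forall A : 'X_{1..s} -> Prop,
     monomial_DR_universal_interp_set A N ->
     forall m : 'X_{1..s}, hyperbolic_cross s N m -> A m).
Proof.
by move=> _; split; [apply: hyperbolic_cross_DR_interp | apply: hyperbolic_cross_minimal].
Qed.
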